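(* Let $\mu\in(0,1)$. For any $t_{\rm r}>0$, the equation $$\Big(\mu t_{\rm r}+\sqrt{1+t_{\rm r}^2-2t_{\rm r}\cos\theta}\Big)\cos\theta-\mu=0$$ has a unique solution $\theta=\theta_{\rm exit}$ in the interval $[\cos^{-1}\mu,\ \tfrac{\pi}{2}]$. Furthermore, $\theta_{\rm exit}\to\tfrac{\pi}{2}$ as $t_{\rm r}\to\infty$. *)

From Stdlib Require Import Reals.
Open Scope R_scope.

Definition exit_eq (mu t th : R) : R :=
  (mu * t + sqrt (1 + t ^ 2 - 2 * t * cos th)) * cos th - mu.

(* On [acos mu, PI/2] the value c = cos th ranges over [0, mu], and squaring the
   equation (sqrt (1 + t^2 - 2 t c)) c = mu (1 - t c) makes c a root of a cubic
   with negative leading coefficient that is negative at 0 and positive at mu.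
   Such a cubic has at most one root in [0, mu], which gives uniqueness; existence
   is the intermediate value theorem.  The same equation forces t cos th <= 1, so
   cos th -> 0 and th -> PI/2 as t -> oo. *)
From Stdlib Require Import Reals Lra.
Open Scope R_scope.

Definition cubic (a b c d x : R) : R := a * x ^ 3 + b * x ^ 2 + c * x + d.

Lemma cubic_factor (a b c d r s x : R) :
  r <> s -> cubic a b c d r = 0 -> cubic a b c d s = 0 ->
  cubic a b c d x = (x - r) * (x - s) * (a * (x + r + s) + b).
Proof.
  intros hrs hr hs.
  assert (hid : (r - s) * (cubic a b c d x - (x - r) * (x - s) * (a * (x + r + s) + b))
                = cubic a b c d r * (x - s) - cubic a b c d s * (x - r))
    by (unfold cubic; ring).
  rewrite hr, hs, !Rmult_0_l, Rminus_0_r in hid.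
  destruct (Rmult_integral _ _ hid) as [h | h]; lra.
Qed.

(* After factoring out two roots x, y in [l, r], the sign at l forces the
   remaining linear factor to be negative at l, hence (as a < 0) also at r. *)
Lemma cubic_root_unique (a b c d l r x y : R) :
  a < 0 -> cubic a b c d l < 0 -> 0 < cubic a b c d r ->
  l <= x <= r -> l <= y <= r -> cubic a b c d x = 0 -> cubic a b c d y = 0 ->
  x = y.
Proof.
  intros ha hl hr hx hy rx ry.
  destruct (Req_dec x y) as [| hxy]; [assumption | exfalso].
  rewrite (cubic_factor a b c d x y l hxy rx ry) in hl.
  rewrite (cubic_factor a b c d x y r hxy rx ry) in hr.
  assert (hl2 : 0 <= (l - x) * (l - y)) by nra.
  assert (hr2 : 0 <= (r - x) * (r - y)) by nra.
  assert (hlin_l : a * (l + x + y) + b < 0) by nra.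
  assert (hlin_r : a * (r + x + y) + b < 0) by nra.
  nra.
Qed.

Lemma lt_sqrt_of_sqr_lt (x y : R) : y ^ 2 < x -> y < sqrt x.
Proof.
  intro h.
  destruct (Rlt_or_le y 0) as [hy | hy].
  - pose proof (sqrt_pos x). lra.
  - rewrite <- (sqrt_pow2 y hy).
    apply sqrt_lt_1_alt. split; [apply pow2_ge_0 | exact h].
Qed.

Lemma exit_radicand_ge0 (t c : R) : -1 <= c <= 1 -> 0 <= 1 + t ^ 2 - 2 * t * c.
Proof. intro hc. assert (0 <= (t - c) ^ 2) by apply pow2_ge_0. nra. Qed.

Lemma exit_eq_continuous (mu t : R) : continuity (exit_eq mu t).
Proof.
  intro th. unfold exit_eq.
  set (g := fun th => 1 + t ^ 2 - 2 * t * cos th).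
  change (continuity_pt ((fct_cte (mu * t) + comp sqrt g) * cos - fct_cte mu)%F th).
  assert (hg : continuity_pt g th).
  { change (continuity_pt (fct_cte (1 + t ^ 2) - fct_cte (2 * t) * cos)%F th).
    apply continuity_pt_minus; [apply continuity_const; intros ? ? ; reflexivity |].
    apply continuity_pt_mult; [apply continuity_const; intros ? ? ; reflexivity |].
    apply continuity_cos. }
  apply continuity_pt_minus; [| apply continuity_const; intros ? ?; reflexivity].
  apply continuity_pt_mult; [| apply continuity_cos].
  apply continuity_pt_plus; [apply continuity_const; intros ? ?; reflexivity |].
  apply continuity_pt_comp; [exact hg |].
  apply continuity_pt_sqrt, exit_radicand_ge0.
  split; [apply COS_bound | apply COS_bound].
Qed.

Lemma exit_eq_acos_gt0 (mu t : R) : 0 < mu < 1 -> 0 < t -> 0 < exit_eq mu t (acos mu).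
Proof.
  intros hmu ht. unfold exit_eq. rewrite cos_acos by lra.
  assert (hsq : 1 - mu * t < sqrt (1 + t ^ 2 - 2 * t * mu)).
  { apply lt_sqrt_of_sqr_lt.
    assert (0 < t ^ 2 * (1 - mu ^ 2)) by (apply Rmult_lt_0_compat; nra).
    nra. }
  nra.
Qed.

Lemma exit_eq_PI2 (mu t : R) : exit_eq mu t (PI / 2) = - mu.
Proof. unfold exit_eq. rewrite cos_PI2. ring. Qed.

Lemma cos_between_acos_PI2 (mu th : R) :
  -1 <= mu <= 1 -> acos mu <= th <= PI / 2 -> 0 <= cos th <= mu.
Proof.
  intros hmu hth. pose proof (acos_bound mu). pose proof PI_RGT_0.
  split.
  - apply cos_ge_0; lra.
  - rewrite <- (cos_acos mu) by lra. apply cos_decr_1; lra.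
Qed.

Lemma acos_le_PI2 (mu : R) : 0 <= mu <= 1 -> acos mu <= PI / 2.
Proof.
  intro hmu. pose proof (acos_bound mu). pose proof PI_RGT_0.
  apply cos_decr_0; try lra.
  rewrite cos_PI2, cos_acos; lra.
Qed.

Lemma exit_eq_cubic (mu t th : R) :
  exit_eq mu t th = 0 ->
  cubic (-2 * t) (1 + t ^ 2 - mu ^ 2 * t ^ 2) (2 * mu ^ 2 * t) (- mu ^ 2) (cos th) = 0.
Proof.
  unfold exit_eq. intro h.
  set (c := cos th) in *.
  assert (hrad : 0 <= 1 + t ^ 2 - 2 * t * c)
    by (apply exit_radicand_ge0; split; apply COS_bound).
  pose proof (sqrt_sqrt _ hrad) as hs.
  set (s := sqrt (1 + t ^ 2 - 2 * t * c)) in *.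
  assert (hsc : s * c = mu * (1 - t * c)) by lra.
  transitivity ((s * c) ^ 2 - (mu * (1 - t * c)) ^ 2).
  - replace ((s * c) ^ 2) with (c ^ 2 * (s * s)) by ring.
    rewrite hs. unfold cubic. ring.
  - rewrite hsc. ring.
Qed.

Lemma exit_eq_root_cos_le (mu t th : R) :
  0 < mu -> 0 <= cos th -> exit_eq mu t th = 0 -> t * cos th <= 1.
Proof.
  unfold exit_eq. intros hmu hc h.
  pose proof (sqrt_pos (1 + t ^ 2 - 2 * t * cos th)). nra.
Qed.

Lemma exit_eq_root_unique (mu t x y : R) :
  0 < mu < 1 -> 0 < t ->
  acos mu <= x <= PI / 2 -> exit_eq mu t x = 0 ->
  acos mu <= y <= PI / 2 -> exit_eq mu t y = 0 -> x = y.
Proof.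
  intros hmu ht hx ex hy ey.
  pose proof (acos_bound mu). pose proof PI_RGT_0.
  set (a := -2 * t). set (b := 1 + t ^ 2 - mu ^ 2 * t ^ 2).
  set (c := 2 * mu ^ 2 * t). set (d := - mu ^ 2).
  assert (h0 : cubic a b c d 0 < 0) by (unfold cubic, d; nra).
  assert (hmu2 : 0 < mu ^ 2 * t ^ 2) by (apply Rmult_lt_0_compat; apply pow_lt; lra).
  assert (hm : cubic a b c d mu = mu ^ 2 * t ^ 2 * (1 - mu ^ 2))
    by (unfold cubic, a, b, c, d; ring).
  apply cos_inj; try lra.
  apply (cubic_root_unique a b c d 0 mu).
  - unfold a; lra.
  - exact h0.
  - rewrite hm. apply Rmult_lt_0_compat; [exact hmu2 | nra].
  - apply cos_between_acos_PI2; [lra | assumption].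
  - apply cos_between_acos_PI2; [lra | assumption].
  - apply exit_eq_cubic; assumption.
  - apply exit_eq_cubic; assumption.
Qed.

Lemma PI2_sub_lt_of_cos_lt_sin (th e : R) :
  0 < e <= PI / 2 -> 0 <= th <= PI -> cos th < sin e -> PI / 2 - e < th.
Proof.
  intros he hth hlt. pose proof PI_RGT_0.
  apply cos_decreasing_0; try lra.
  rewrite cos_shift. exact hlt.
Qed.

Lemma exit_eq_root_gt_PI2_sub (mu t th e : R) :
  0 < mu < 1 -> 0 < e <= PI / 2 -> / sin e < t ->
  acos mu <= th <= PI / 2 -> exit_eq mu t th = 0 -> PI / 2 - e < th.
Proof.
  intros hmu he ht hth hroot. pose proof PI_RGT_0.
  assert (hsin : 0 < sin e) by (apply sin_gt_0; lra).
  assert (ht_sin : 1 < t * sin e).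
  { apply (Rmult_lt_compat_r (sin e)) in ht; [| exact hsin].
    rewrite Rinv_l in ht; lra. }
  pose proof (cos_between_acos_PI2 mu th ltac:(lra) hth) as hcos.
  pose proof (exit_eq_root_cos_le mu t th (proj1 hmu) (proj1 hcos) hroot).
  pose proof (acos_bound mu).
  apply PI2_sub_lt_of_cos_lt_sin; [exact he | lra | nra].
Qed.

Theorem proposition1 (mu : R) (hmu : 0 < mu < 1) :
  (forall t : R, 0 < t ->
     exists! th : R, acos mu <= th <= PI / 2 /\ exit_eq mu t th = 0)
  /\
  (forall theta_exit : R -> R,
     (forall t : R, 0 < t ->
        acos mu <= theta_exit t <= PI / 2 /\ exit_eq mu t (theta_exit t) = 0) ->
     forall eps : R, 0 < eps ->
       exists M : R, 0 < M /\
         forall t : R, M < t -> Rabs (theta_exit t - PI / 2) < eps).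
Proof.
  pose proof PI_RGT_0.
  split.
  - intros t ht.
    assert (hsign : exit_eq mu t (acos mu) * exit_eq mu t (PI / 2) <= 0).
    { pose proof (exit_eq_acos_gt0 mu t hmu ht). rewrite exit_eq_PI2. nra. }
    destruct (IVT_cor _ _ _ (exit_eq_continuous mu t) (acos_le_PI2 mu ltac:(lra)) hsign)
      as [th [hth hroot]].
    exists th. split; [tauto |].
    intros y [hy ey]. exact (exit_eq_root_unique mu t th y hmu ht hth hroot hy ey).
  - intros th hth eps heps.
    set (e := Rmin eps (PI / 2)).
    assert (he : 0 < e <= PI / 2) by (unfold e, Rmin; destruct Rle_dec; lra).
    assert (hsin : 0 < sin e) by (apply sin_gt_0; lra).
    exists (/ sin e). split; [apply Rinv_0_lt_compat; exact hsin |].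
    intros t ht.
    assert (ht0 : 0 < t) by (apply Rinv_0_lt_compat in hsin; lra).
    destruct (hth t ht0) as [hrange hroot].
    pose proof (exit_eq_root_gt_PI2_sub mu t (th t) e hmu he ht hrange hroot).
    assert (e <= eps) by apply Rmin_l.
    rewrite Rabs_left1; lra.
Qed.
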